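(* Let $N\ge 2$, $m\ge 3$ be integers and fix $K$ with $0<K<N$. Then the linear span of the vertex functions $\iota_k\varphi$ on $\mathcal{B}_N\vdash\mathcal{C}_m$, where $k\in\mathbb{Z}_m$ and $\varphi$ ranges over the Dirichlet eigenvectors of $L(\mathcal{B}_N)$ with eigenvalue $2K$, has dimension $m\left(\binom{N}{K}-1\right)$.
   Context: For a finite simple undirected graph $\mathcal{G}$, $L(\mathcal{G})$ denotes the unnormalized Laplacian $(Lf)(v)=\sum_{w\sim v}[f(v)-f(w)]$. The Boolean cube $\mathcal{B}_N$ has vertex set $\mathbb{Z}_2^N$, with $v\sim w$ iff $v-w=e_i$ for some standard basis vector $e_i$; its Laplacian eigenvalues are $2\kappa$, $\kappa=0,\dots,N$, the $2\kappa$-eigenspace being spanned by the Hadamard vectors $h_\gamma(v)=2^{-N/2}(-1)^{\langle v,\gamma\rangle}$ with $\gamma\in\mathbb{Z}_2^N$ having exactly $\kappa$ coordinates equal to $1$. Write $\mathbf{0}=(0,\dots,0)$, $\mathbf{1}=(1,\dots,1)$. The graph $\mathcal{B}_N\vdash\mathcal{C}_m$ is obtained by taking $m$ disjoint copies $\mathcal{B}_N^k$, $k\in\mathbb{Z}_m$, of $\mathcal{B}_N$ (the copy of $v$ in $\mathcal{B}_N^k$ denoted $v^k$), keeping all edges inside each copy, and adding for each $k\in\mathbb{Z}_m$ the edge $\mathbf{1}^k\sim\mathbf{0}^{k+1}$ (indices mod $m$). A Dirichlet eigenvector of $L(\mathcal{B}_N)$ is an eigenvector of $L(\mathcal{B}_N)$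 vanishing at $\mathbf{0}$ and $\mathbf{1}$. For a vertex function $\varphi$ on $\mathcal{B}_N$, $\iota_k\varphi$ is the function on $\mathcal{B}_N\vdash\mathcal{C}_m$ equal to $\varphi(u)$ at $u^k$ and to $0$ on $\mathcal{B}_N^\ell$, $\ell\ne k$. *)

From HB Require Import structures.
From mathcomp Require Import all_boot all_order all_algebra.
Set Implicit Arguments. Unset Strict Implicit. Unset Printing Implicit Defensive.
Import Order.TTheory GRing.Theory Num.Theory.
Local Open Scope ring_scope.

Definition cube (N : nat) : finType := {ffun 'I_N -> bool}.

Definition cube0 (N : nat) : cube N := [ffun _ => false].
Definition cube1 (N : nat) : cube N := [ffun _ => true].

Definition cube_adj (N : nat) (v w : cube N) : bool :=
  #|[set i : 'I_N | v i != w i]| == 1%N.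

Definition cube_lap (R : nzRingType) (N : nat) (f : {ffun cube N -> R^o}) : {ffun cube N -> R^o} :=
  [ffun v => \sum_(w : cube N | cube_adj v w) (f v - f w)].

Definition dirichlet_eigvec (R : nzRingType) (N : nat) (lam : R) (f : {ffun cube N -> R^o}) : Prop :=
  [/\ f != 0, cube_lap f = lam *: f, f (cube0 N) = 0 & f (cube1 N) = 0].

(* Vertex set of B_N |- C_m : copies v^k, k in Z_m, encoded as pairs (k, v). *)
Definition bc_vertex (N m : nat) : finType := ('I_m * cube N)%type.

(* Edge relation of B_N |- C_m (for documentation; indices mod m). *)
Definition bc_adj (N m : nat) (x y : bc_vertex N m) : bool :=
  ((x.1 == y.1) && cube_adj x.2 y.2)
  || ((val y.1 == (val x.1).+1 %% m)%N && (x.2 == cube1 N) && (y.2 == cube0 N))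
  || ((val x.1 == (val y.1).+1 %% m)%N && (y.2 == cube1 N) && (x.2 == cube0 N)).

Definition iota_copy (R : nzRingType) (N m : nat) (k : 'I_m) (phi : {ffun cube N -> R^o})
  : {ffun bc_vertex N m -> R^o} :=
  [ffun x : bc_vertex N m => if x.1 == k then phi x.2 else 0].

Definition is_span (K : fieldType) (vT : vectType K) (S : vT -> Prop) (U : {vspace vT}) : Prop :=
  forall W : {vspace vT}, (U <= W)%VS <-> (forall v, S v -> v \in W).

From HB Require Import structures.
From mathcomp Require Import all_boot all_order all_algebra.
Set Implicit Arguments. Unset Strict Implicit. Unset Printing Implicit Defensive.
Import Order.TTheory GRing.Theory Num.Theory.
Local Open Scope ring_scope.

(* The unnormalised Hadamard vectors h_g are eigenvectors of L(B_N) with eigenvalue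
   2|g| and are pairwise orthogonal, so by Fourier inversion the 2K-eigenspace is
   spanned freely by the h_g with |g| = K and has dimension C(N,K).
   Each such h_g equals 1 at 0 and (-1)^K at 1, hence every 2K-eigenvector f satisfies
   f(1) = (-1)^K f(0): the Dirichlet eigenvectors are the nonzero vectors of the kernel
   of evaluation at 0 on the eigenspace, a subspace of dimension C(N,K) - 1 since
   h_g(0) = 1 != 0.  The maps iota_k are injective with disjoint supports, so the span
   in question is the direct sum of m copies of that kernel. *)

Section Hadamard.

Variables (R : numFieldType) (N : nat).
Implicit Types (g h v w : cube N) (f : {ffun cube N -> R^o}).

Definition cube_flip (i : 'I_N) v : cube N := [ffun j => if j == i then ~~ v j else v j].

Definition cube_weight g := #|[set i | g i]|.

(* The paper's h_g without its normalisation 2^(-N/2). *)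
Definition hadamard g v : R := \prod_(j < N) (-1) ^+ (g j && v j).

Definition hadamardF g : {ffun cube N -> R^o} := [ffun v => hadamard g v].

Definition fourier_coef f g : R := \sum_v f v * hadamard g v.

Lemma cube_flipK i : involutive (cube_flip i).
Proof.
by move=> v; apply/ffunP => j; rewrite !ffunE; case: eqP => // ->; rewrite negbK.
Qed.

Lemma cube_flip_inj v : injective (cube_flip ^~ v).
Proof.
move=> i j /ffunP/(_ i); rewrite !ffunE eqxx.
by case: eqP => [->|_] //; case: (v i).
Qed.

Lemma cube_adjE v w : cube_adj v w = (w \in [set cube_flip i v | i : 'I_N]).
Proof.
apply/cards1P/imsetP => [[i Di] | [i _ ->]]; last first.
  exists i; apply/setP => j; rewrite !inE ffunE.
  by case: (j == i); rewrite ?eqxx //=; case: (v j).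
exists i; rewrite ?inE //; apply/ffunP => j; rewrite ffunE.
have /setP/(_ j) := Di; rewrite !inE.
by case: (j == i); case: (v j); case: (w j).
Qed.

Lemma sum_cube_adj v (G : cube N -> R) :
  \sum_(w | cube_adj v w) G w = \sum_(i < N) G (cube_flip i v).
Proof.
rewrite (eq_bigl (mem [set cube_flip i v | i : 'I_N])) => [|w]; last by rewrite cube_adjE.
by rewrite big_imset //= => i j _ _; apply: cube_flip_inj.
Qed.

Lemma hadamard_flip g i v :
  hadamard g (cube_flip i v) = (-1) ^+ g i * hadamard g v.
Proof.
rewrite /hadamard (bigD1 i) // [in RHS](bigD1 i) //= mulrA; congr (_ * _).
  by rewrite ffunE eqxx; case: (g i); case: (v i); rewrite /= ?mulN1r ?opprK ?mul1r.
by apply: eq_bigr => j /negPf ji; rewrite ffunE ji.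
Qed.

Lemma sum_sign_weight g : \sum_(i < N) (1 - (-1) ^+ g i) = ((cube_weight g).*2)%:R :> R.
Proof.
rewrite (bigID (fun i => g i)) /= [X in _ + X]big1 => [|i /negPf ->]; last by rewrite subrr.
rewrite addr0 (eq_bigr (fun _ => 2)) => [|i ->]; last by rewrite opprK.
rewrite (eq_bigl (fun i => i \in [set i | g i])) => [|i]; last by rewrite inE.
by rewrite sumr_const -mul2n natrM mulr_natr.
Qed.

Lemma cube_lap_hadamard g :
  cube_lap (hadamardF g) = ((cube_weight g).*2)%:R *: hadamardF g.
Proof.
apply/ffunP => v; rewrite !ffunE sum_cube_adj -sum_sign_weight scaler_suml.
by apply: eq_bigr => i _; rewrite ffunE hadamard_flip scalerBl scale1r.
Qed.

Lemma hadamardC g v : hadamard g v = hadamard v g.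
Proof. by apply: eq_bigr => j _; rewrite andbC. Qed.

Lemma hadamard_cube0 g : hadamard g (cube0 N) = 1.
Proof. by rewrite /hadamard big1 // => j _; rewrite ffunE andbF. Qed.

Lemma hadamard_cube1 g : hadamard g (cube1 N) = (-1) ^+ cube_weight g.
Proof.
rewrite /hadamard (eq_bigr (fun j => if g j then -1 else 1)) => [|j _]; last first.
  by rewrite ffunE andbT; case: (g j).
by rewrite -big_mkcond -prodr_const; apply: eq_bigl => i; rewrite inE.
Qed.

Lemma two_expr_neq0 : 2 ^+ N != 0 :> R.
Proof. by rewrite expf_eq0 pnatr_eq0 andbF. Qed.

Lemma hadamard_orthogonal g h :
  \sum_v hadamard g v * hadamard h v = (g == h)%:R * 2 ^+ N.
Proof.
under eq_bigr do rewrite -big_split /=.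
rewrite -(bigA_distr_bigA (fun j b => (-1) ^+ (g j && b) * (-1) ^+ (h j && b))) /=.
under eq_bigr do rewrite big_bool /= !andbT !andbF expr0 mulr1.
have [<- | neq_gh] := eqVneq g h.
  rewrite mul1r (eq_bigr (fun _ => 2)) => [|j _]; last by rewrite -expr2 sqrr_sign.
  by rewrite prodr_const card_ord.
have [j gj_neq_hj] : exists j, g j != h j.
  apply/existsP; apply: contraNT neq_gh => /existsPn g_eq_h.
  by apply/eqP/ffunP => j; apply/eqP/negbNE/g_eq_h.
rewrite mul0r (bigD1 j) //= [_ + _](_ : _ = 0) ?mul0r //.
by move: gj_neq_hj; case: (g j); case: (h j); rewrite //= ?expr1 ?mulr1 ?mul1r addrC subrr.
Qed.

Lemma fourier_inversion f v :
  \sum_g fourier_coef f g * hadamard g v = 2 ^+ N * f v.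
Proof.
transitivity (\sum_w f w * ((w == v)%:R * 2 ^+ N)).
  under eq_bigr do rewrite mulr_suml.
  rewrite exchange_big; apply: eq_bigr => w _ /=.
  rewrite -hadamard_orthogonal mulr_sumr; apply: eq_bigr => g _.
  by rewrite -mulrA !(hadamardC g).
rewrite (bigD1 v) //= big1 => [|w /negPf ->]; last by rewrite mul0r mulr0.
by rewrite eqxx mul1r addr0 mulrC.
Qed.

Lemma fourier_coef_lap f g :
  fourier_coef (cube_lap f) g = ((cube_weight g).*2)%:R * fourier_coef f g.
Proof.
rewrite /fourier_coef -sum_sign_weight mulr_suml.
under eq_bigr do rewrite ffunE sum_cube_adj mulr_suml.
rewrite exchange_big; apply: eq_bigr => i _ /=.
under eq_bigr do rewrite mulrBl.
rewrite sumrB mulrBl mul1r; congr (_ - _).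
rewrite (reindex_inj (inv_inj (cube_flipK i))) /= mulr_sumr.
by apply: eq_bigr => v _; rewrite cube_flipK hadamard_flip mulrCA.
Qed.

Lemma fourier_coef_lap_eigvec_eq0 K f g :
  cube_lap f = (K.*2)%:R *: f -> cube_weight g != K -> fourier_coef f g = 0.
Proof.
move=> Lf neq_gK.
have : (K.*2)%:R * fourier_coef f g = (cube_weight g).*2%:R * fourier_coef f g.
  rewrite -fourier_coef_lap Lf mulr_sumr; apply: eq_bigr => v _.
  by rewrite ffunE mulrA.
move/eqP; rewrite -subr_eq0 -mulrBl mulf_eq0 subr_eq0 eqr_nat (inj_eq double_inj) eq_sym.
by rewrite (negPf neq_gK) => /eqP.
Qed.

Definition cube_level K : {set cube N} := [set g | cube_weight g == K].

Lemma card_cube_level K : #|cube_level K| = 'C(N, K).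
Proof.
pose cube_of (A : {set 'I_N}) : cube N := [ffun i => i \in A].
have cube_of_inj : injective cube_of.
  by move=> A B /ffunP eqAB; apply/setP => i; have := eqAB i; rewrite !ffunE.
have weight_cube_of A : cube_weight (cube_of A) = #|A|.
  by apply: eq_card => i; rewrite inE ffunE.
transitivity #|[set A : {set 'I_N} | #|A| == K]|; last by rewrite card_draws card_ord.
rewrite -(card_imset _ cube_of_inj); apply: eq_card => g.
rewrite inE; apply/idP/imsetP => [/eqP <- | [A + ->]].
  by exists [set i | g i]; rewrite ?inE //; apply/ffunP => i; rewrite ffunE inE.
by rewrite inE weight_cube_of.
Qed.

Lemma lap_eigvec_expansion K f : cube_lap f = (K.*2)%:R *: f ->
  f = \sum_(g in cube_level K) (fourier_coef f g / 2 ^+ N) *: hadamardF g.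
Proof.
move=> Lf; apply/ffunP => v; rewrite sum_ffunE; apply: (mulfI two_expr_neq0).
rewrite -fourier_inversion mulr_sumr (bigID (mem (cube_level K))) /= addrC.
rewrite big1 ?add0r => [|g]; last first.
  by rewrite inE => /(fourier_coef_lap_eigvec_eq0 Lf) ->; rewrite mul0r.
by apply: eq_bigr => g _; rewrite !ffunE mulrA mulrCA mulfV ?two_expr_neq0 ?mulr1.
Qed.

Lemma lap_eigvec_cube1 K f : cube_lap f = (K.*2)%:R *: f ->
  f (cube1 N) = (-1) ^+ K * f (cube0 N).
Proof.
move=> /lap_eigvec_expansion ->; rewrite !sum_ffunE mulr_sumr.
apply: eq_bigr => g; rewrite inE => /eqP weight_g.
by rewrite !ffunE hadamard_cube1 hadamard_cube0 weight_g mulrCA mulr1.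
Qed.

Lemma free_hadamard (s : seq (cube N)) : uniq s -> free [seq hadamardF g | g <- s].
Proof.
move=> s_uniq; apply/(@freeP _ _ _ (in_tuple _)) => k k0 i.
set X := [seq hadamardF g | g <- s] in k k0 i *.
have X_orth (j : 'I_(size X)) :
  \sum_v X`_j v * hadamard (nth (cube0 N) s i) v = (j == i)%:R * 2 ^+ N.
  have lt_s (l : 'I_(size X)) : (l < size s)%N by rewrite -(size_map hadamardF).
  rewrite (nth_map (cube0 N)) //; under eq_bigr do rewrite ffunE.
  by rewrite hadamard_orthogonal nth_uniq.
apply: (mulIf two_expr_neq0); rewrite mul0r.
transitivity (\sum_j k j * ((j == i)%:R * 2 ^+ N)).
  by rewrite (bigD1 i) //= big1 ?eqxx ?mul1r ?addr0 // => j /negPf ->; rewrite mul0r mulr0.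
transitivity (\sum_v (\sum_j k j *: X`_j) v * hadamard (nth (cube0 N) s i) v).
  under eq_bigr do rewrite -X_orth mulr_sumr.
  rewrite exchange_big; apply: eq_bigr => v _.
  by rewrite sum_ffunE mulr_suml; apply: eq_bigr => j _; rewrite ffunE mulrA.
by rewrite k0 big1 // => v _; rewrite ffunE mul0r.
Qed.

Fact cube_lap_is_linear : linear (@cube_lap R N).
Proof.
move=> a f h; apply/ffunP => v; rewrite !ffunE scaler_sumr -big_split /=.
by apply: eq_bigr => w _; rewrite !ffunE scalerBr addrACA opprD.
Qed.

HB.instance Definition _ :=
  GRing.isLinear.Build R {ffun cube N -> R^o} {ffun cube N -> R^o} *:%R
    (@cube_lap R N) cube_lap_is_linear.

End Hadamard.

Section FfunEval.

Variables (R : nzRingType) (T : finType) (x : T).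

Definition ffun_eval (f : {ffun T -> R^o}) : R^o := f x.

Fact ffun_eval_is_linear : linear ffun_eval.
Proof. by move=> a f h; rewrite /ffun_eval !ffunE. Qed.

HB.instance Definition _ :=
  GRing.isLinear.Build R {ffun T -> R^o} R^o *:%R ffun_eval ffun_eval_is_linear.

End FfunEval.

Section DirichletSpace.

Variables (R : numFieldType) (N : nat).
Implicit Types (K : nat) (f : {ffun cube N -> R^o}).

Definition lap_eigenspace K : {vspace {ffun cube N -> R^o}} :=
  lker (linfun (@cube_lap R N) - (K.*2)%:R *: \1)%VF.

(* Vanishing at [cube1 N] is automatic on the eigenspace, by [lap_eigvec_cube1]. *)
Definition dirichlet_space K : {vspace {ffun cube N -> R^o}} :=
  (lap_eigenspace K :&: lker (linfun (ffun_eval (cube0 N))))%VS.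

Lemma memv_lap_eigenspace K f :
  (f \in lap_eigenspace K) = (cube_lap f == (K.*2)%:R *: f).
Proof. by rewrite memv_ker !lfun_simp subr_eq0. Qed.

Lemma lap_eigenspace_hadamard K :
  lap_eigenspace K = <<[seq hadamardF R g | g in cube_level N K]>>%VS.
Proof.
apply/eqP; rewrite eqEsubv; apply/andP; split.
  apply/subvP => f; rewrite memv_lap_eigenspace => /eqP/lap_eigvec_expansion ->.
  by apply: memv_suml => g g_K; exact/memvZ/memv_span/image_f.
apply/span_subvP => h /imageP[g]; rewrite inE => /eqP weight_g ->.
by rewrite memv_lap_eigenspace cube_lap_hadamard weight_g.
Qed.

Lemma dim_lap_eigenspace K : \dim (lap_eigenspace K) = 'C(N, K).
Proof.
rewrite lap_eigenspace_hadamard (eqnP (free_hadamard _ (enum_uniq _))).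
by rewrite size_map -cardE card_cube_level.
Qed.

Lemma dim_dirichlet_space K : (K <= N)%N -> \dim (dirichlet_space K) = ('C(N, K) - 1)%N.
Proof.
move=> leKN; set ev0 := linfun (@ffun_eval R _ (cube0 N)).
have := limg_ker_dim ev0 (lap_eigenspace K); rewrite dim_lap_eigenspace => <-.
suff -> : \dim (ev0 @: lap_eigenspace K) = 1%N by rewrite addnK.
have [g0 g0_K] : exists g0, g0 \in cube_level N K.
  by apply/card_gt0P; rewrite card_cube_level bin_gt0.
apply/eqP; rewrite eqn_leq (leq_trans (dimvS (subvf _))) ?dimvf //=.
rewrite lt0n dimv_eq0; apply/negP => /eqP img0.
have E_g0 : hadamardF R g0 \in lap_eigenspace K.
  by move: g0_K; rewrite inE memv_lap_eigenspace cube_lap_hadamard => /eqP ->.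
have := memv_img ev0 E_g0.
by rewrite img0 memv0 lfunE /= /ffun_eval ffunE hadamard_cube0 oner_eq0.
Qed.

Lemma dirichlet_eigvecP K phi :
  dirichlet_eigvec (K.*2)%:R phi <-> phi != 0 /\ phi \in dirichlet_space K.
Proof.
rewrite /dirichlet_eigvec memv_cap memv_lap_eigenspace memv_ker lfunE /= /ffun_eval.
split => [[nz_phi -> phi0 _] | [nz_phi /andP[/eqP Lphi /eqP phi0]]].
  by rewrite phi0 !eqxx.
by split => //; rewrite (lap_eigvec_cube1 Lphi) phi0 mulr0.
Qed.

End DirichletSpace.

Section Copies.

Variables (F : fieldType) (N m : nat).
Implicit Types (D : {vspace {ffun cube N -> F^o}}) (phi : {ffun cube N -> F^o}).

Fact iota_copy_is_linear (k : 'I_m) : linear (@iota_copy F N m k).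
Proof.
move=> a phi psi; apply/ffunP => x; rewrite !ffunE.
by case: (x.1 == k); rewrite ?scaler0 ?addr0.
Qed.

HB.instance Definition _ (k : 'I_m) :=
  GRing.isLinear.Build F {ffun cube N -> F^o} {ffun bc_vertex N m -> F^o} *:%R
    (@iota_copy F N m k) (iota_copy_is_linear k).

Definition sum_copies D : {vspace {ffun bc_vertex N m -> F^o}} :=
  (\sum_(k < m) linfun (@iota_copy F N m k) @: D)%VS.

Lemma iota_copy_inj (k : 'I_m) : injective (@iota_copy F N m k).
Proof.
move=> phi psi /ffunP eq_iota; apply/ffunP => v.
by have := eq_iota (k, v); rewrite !ffunE eqxx.
Qed.

Lemma iota_copy_img_vanish D (k : 'I_m) g (x : bc_vertex N m) :
  g \in (linfun (@iota_copy F N m k) @: D)%VS -> x.1 != k -> g x = 0.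
Proof. by case/memv_imgP => phi _ -> /negPf x_k; rewrite lfunE ffunE /= x_k. Qed.

Lemma directv_sum_copies D : directv (sum_copies D).
Proof.
apply/directv_sum_independent => us us_img sum0 k _; apply/ffunP => x; rewrite ffunE.
have [x_k | neq_xk] := eqVneq x.1 k; last exact: iota_copy_img_vanish (us_img k isT) neq_xk.
move/ffunP: sum0 => /(_ x); rewrite sum_ffunE ffunE (bigD1 k) //= big1 ?addr0 //.
by move=> j neq_jk; apply: iota_copy_img_vanish (us_img j isT) _; rewrite x_k eq_sym.
Qed.

Lemma dim_sum_copies D : \dim (sum_copies D) = (m * \dim D)%N.
Proof.
rewrite (directvP (directv_sum_copies D)) /= (eq_bigr (fun _ => \dim D)) => [|k _].
  by rewrite sum_nat_const card_ord.
apply: limg_dim_eq; have /lker0P/eqP -> : injective (linfun (@iota_copy F N m k)).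
  by move=> phi psi; rewrite !lfunE; apply: iota_copy_inj.
exact: capv0.
Qed.

Lemma is_span_sum_copies D (P : {ffun cube N -> F^o} -> Prop) :
    (forall phi, P phi <-> phi != 0 /\ phi \in D) ->
  is_span (fun g => exists (k : 'I_m) phi, P phi /\ g = iota_copy k phi) (sum_copies D).
Proof.
move=> PE W; split => [sub_W g [k [phi [/PE[_ D_phi] ->]]] | gen_W].
  apply: (subvP sub_W); apply: (subvP (sumv_sup k _ (subvv _))) => //.
  by rewrite -(lfunE (iota_copy k)) memv_img.
apply/subv_sumP => k _; apply/subvP => _ /memv_imgP[phi D_phi ->]; rewrite lfunE.
have [-> | nz_phi] := eqVneq phi 0; first by rewrite linear0 mem0v.
by apply: gen_W; exists k, phi; split => //; apply/PE.
Qed.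

End Copies.

Theorem lemma2 (R : realFieldType) (N m K : nat) :
  (2 <= N)%N -> (3 <= m)%N -> (0 < K)%N -> (K < N)%N ->
  exists U : {vspace {ffun bc_vertex N m -> R^o}},
    is_span (fun g => exists (k : 'I_m) (phi : {ffun cube N -> R^o}),
                        dirichlet_eigvec ((K.*2)%:R : R) phi /\ g = iota_copy k phi) U
    /\ \dim U = (m * ('C(N, K) - 1))%N.
Proof.
move=> _ _ _ ltKN; exists (sum_copies m (dirichlet_space R N K)); split.
  by apply: is_span_sum_copies => phi; apply: dirichlet_eigvecP.
by rewrite dim_sum_copies dim_dirichlet_space // ltnW.
Qed.
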